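(* Let $Q=(q_1,\ldots,q_k)$ be an instance of the FIFO stack-up problem and $p$ a positive integer. If the sequence graph $G_Q$ has a directed path-decomposition of width $p-1$, then there is a processing of $Q$ with $p$ stack-up places, i.e. a processing in which every configuration has at most $p$ open pallets.
   Context: A bin $b$ carries a pallet symbol $\mathit{plt}(b)$ (a positive integer). An instance is a list $Q=(q_1,\ldots,q_k)$ of finite sequences of bins, all bins pairwise distinct; it is assumed that for every pallet symbol occurring, the sequences together contain at least two bins destined for it. $\mathit{plts}(Q)$ is the set of pallet symbols occurring in $Q$. A subsequence of $q=(b_1,\ldots,b_n)$ is a suffix $q'=(b_j,\ldots,b_n)$ (possibly empty), and $q-q'=(b_1,\ldots,b_{j-1})$. A configuration is a pair $(Q,Q')$ with $Q'=(q'_1,\ldots,q'_k)$, each $q'_j$ a subsequence of $q_j$. A pallet $t$ is open in $(Q,Q')$ if some bin for $t$ lies in some $q'_i$ and some bin for $t$ lies in some $q_j-q'_j$. A transformation step removes the first bin of one nonempty $q'_i$. A processing of $Q$ is a sequence of transformation steps transforming $(Q,Q)$ into the configuration where all $k$ sequences are empty. The sequence graph $G_Q$ has vertex set $\mathit{plts}(Q)$ and an arc $(u,v)$ iff $u\ne v$ and some sequence $q_i$ contains a bin for $u$ at a position strictly before a bin for $v$. A directed path-decomposition of a digraph $G=(V,E)$ is a sequence $(X_1,\ldots,X_r)$ of subsets of $V$ with: (1) $\bigcup_i X_i=V$; (2) for every arc $(u,v)$ there are $i\le j$ with $u\in X_i$, $v\in X_j$; (3) if $u\in X_i\cap X_j$,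 $i\le j$, then $u\in X_l$ for all $i\le l\le j$. Its width is $\max_i|X_i|-1$. *)

From mathcomp Require Import all_boot.
Set Implicit Arguments. Unset Strict Implicit. Unset Printing Implicit Defensive.

Section FIFO.
Variables (T : eqType) (plt : T -> nat).

Definition instance (Q : seq (seq T)) : Prop :=
  [/\ uniq (flatten Q),
      (forall b, b \in flatten Q -> 0 < plt b) &
      (forall b, b \in flatten Q ->
         1 < count (fun b' => plt b' == plt b) (flatten Q))].

Definition plts (Q : seq (seq T)) : seq nat := undup (map plt (flatten Q)).

(* A configuration (Q,Q') is represented by Q' (aligned with Q);
   q_j - q'_j = take (size q_j - size q'_j) q_j. *)
Definition removed (q q' : seq T) : seq T := take (size q - size q') q.

Definition open_pallet (Q C : seq (seq T)) (t : nat) : bool :=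
  has (fun q' => has (fun b => plt b == t) q') C &&
  has (fun qq => has (fun b => plt b == t) (removed qq.1 qq.2)) (zip Q C).

Definition open_pallets (Q C : seq (seq T)) : seq nat :=
  [seq t <- plts Q | open_pallet Q C t].

Definition step (C C' : seq (seq T)) : bool :=
  has (fun i => (nth [::] C i != [::]) &&
                (C' == set_nth [::] C i (behead (nth [::] C i))))
      (iota 0 (size C)).

Definition processing (Q : seq (seq T)) (cs : seq (seq (seq T))) : bool :=
  path step Q cs && (last Q cs == nseq (size Q) [::]).

Definition sg_arc (Q : seq (seq T)) (u v : nat) : bool :=
  (u != v) &&
  has (fun q => has (fun n => (u \in map plt (take n q)) &&
                              (v \in map plt (drop n q)))
                    (iota 0 (size q).+1)) Q.

End FIFO.

Definition dir_path_decomp (V : seq nat) (E : nat -> nat -> bool)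
    (X : seq (seq nat)) : Prop :=
  [/\ (forall i, i < size X -> {subset nth [::] X i <= V}),
      (forall v, v \in V -> exists2 i, i < size X & v \in nth [::] X i),
      (forall u v, u \in V -> v \in V -> E u v ->
         exists i j, [/\ i <= j, j < size X, u \in nth [::] X i
                       & v \in nth [::] X j]) &
      (forall u i j l, i <= l -> l <= j -> j < size X ->
         u \in nth [::] X i -> u \in nth [::] X j -> u \in nth [::] X l)].

Definition dpd_width (X : seq (seq nat)) : nat :=
  (\max_(B <- X) size (undup B)).-1.

From mathcomp Require Import all_boot zify.
Set Implicit Arguments. Unset Strict Implicit. Unset Printing Implicit Defensive.

(* Greedy processing.  For a pallet u let a(u) and l(u) be the first and the
   last bag of the decomposition containing u.  Repeatedly pick a remaining bin
   w with l(plt w) minimal and remove the front bin x of its sequence: either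
   plt x = plt w or (plt x, plt w) is an arc of G_Q, so a(plt x) <= l(plt w).
   Hence the invariant "a(plt r) <= l(plt w) for every removed r and remaining
   w" is preserved.  In a configuration satisfying it, with i the least
   l(plt w) over remaining bins w, every open pallet t has a(t) <= i <= l(t),
   so t lies in bag i, and there are at most p open pallets. *)

Lemma exists_argmin_seq (T : eqType) (f : T -> nat) (s : seq T) :
  s != [::] -> exists2 x, x \in s & forall y, y \in s -> f x <= f y.
Proof.
case: s => [//|a s] _.
have hex : exists n, has (fun x => f x == n) (a :: s).
  by exists (f a); rewrite /= eqxx.
case: (ex_minnP hex) => n /hasP[x xs /eqP <-] nmin.
by exists x => // y ys; apply: nmin; apply/hasP; exists y.
Qed.

Lemma mem_flatten_nth (T : eqType) (s : seq (seq T)) k b :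
  b \in nth [::] s k -> b \in flatten s.
Proof.
case: (ltnP k (size s)) => [hk hb|hk]; last by rewrite nth_default.
by apply/flattenP; exists (nth [::] s k); rewrite ?mem_nth.
Qed.

Lemma flatten_nil_nseq (T : Type) (s : seq (seq T)) :
  flatten s = [::] -> s = nseq (size s) [::].
Proof. by elim: s => [//|[|//] s IH] /= /IH <-. Qed.

Lemma nth_cons_lt_size (T : Type) (s : seq (seq T)) j x rest :
  nth [::] s j = x :: rest -> j < size s.
Proof. by move=> sj; rewrite ltnNge; apply/negP => /(nth_default [::]); rewrite sj. Qed.

Lemma perm_flatten_pop (T : eqType) (s : seq (seq T)) j x rest :
  nth [::] s j = x :: rest ->
  perm_eq (flatten s) (x :: flatten (set_nth [::] s j rest)).
Proof.
elim: s j => [|c s IH] [|j] //= hc; first by rewrite hc.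
by rewrite perm_sym -cat1s perm_catCA perm_cat2l perm_sym; apply: IH.
Qed.

Section BagIndices.

Variable X : seq (seq nat).

Definition first_bag u := find (fun B => u \in B) X.
Definition last_bag u := \max_(i < size X | u \in nth [::] X i) i.

Variables (u i : nat).
Hypotheses (i_lt : i < size X) (u_in : u \in nth [::] X i).

Lemma first_bag_le : first_bag u <= i.
Proof. by rewrite leqNgt; apply/negP => /(before_find [::]) /=; rewrite u_in. Qed.

Lemma mem_first_bag : u \in nth [::] X (first_bag u).
Proof.
have hasX : has (fun B => u \in B) X by apply/(has_nthP [::]); exists i.
by have := nth_find [::] hasX.
Qed.

Lemma last_bag_ge : i <= last_bag u.
Proof.
exact: (@leq_bigmax_cond _ (fun k : 'I_(size X) => u \in nth [::] X k)
          (fun k : 'I_(size X) => (k : nat)) (Ordinal i_lt)).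
Qed.

Lemma last_bag_spec : last_bag u < size X /\ u \in nth [::] X (last_bag u).
Proof.
have : 0 < #|[pred k : 'I_(size X) | u \in nth [::] X k]|.
  by apply/card_gt0P; exists (Ordinal i_lt).
case/(eq_bigmax_cond (fun k : 'I_(size X) => (k : nat))) => k hk e.
by have -> : last_bag u = k by exact: e.
Qed.

End BagIndices.

Section Processing.

Variables (T : eqType) (plt : T -> nat) (Q : seq (seq T)).

Definition config (C : seq (seq T)) :=
  size C = size Q /\ forall k, suffix (nth [::] C k) (nth [::] Q k).

Definition removed_bin (C : seq (seq T)) r :=
  exists2 k, k < size Q & r \in removed (nth [::] Q k) (nth [::] C k).

Lemma removed_cat (R c : seq T) : removed (R ++ c) c = R.
Proof. by rewrite /removed size_cat addnK take_size_cat. Qed.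

Lemma cat_removed (q c : seq T) : suffix c q -> removed q c ++ c = q.
Proof. by case/suffixP => R ->; rewrite removed_cat. Qed.

Lemma config_Q : config Q.
Proof. by split=> // k; apply: suffix_refl. Qed.

Lemma removed_bin_Q r : ~ removed_bin Q r.
Proof. by case=> k _; rewrite /removed subnn take0. Qed.

Lemma mem_plts b : b \in flatten Q -> plt b \in plts plt Q.
Proof. by move=> hb; rewrite /plts mem_undup map_f. Qed.

Lemma config_mem C w : config C -> w \in flatten C -> w \in flatten Q.
Proof.
case=> _ suf /flattenP[c cC wc]; apply: (@mem_flatten_nth _ _ (index c C)).
by have /suffixP[R ->] := suf (index c C); rewrite nth_index // mem_cat wc orbT.
Qed.

Lemma open_palletP C t : size C = size Q -> open_pallet plt Q C t ->
  (exists2 w, w \in flatten C & plt w = t) /\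
  (exists2 r, removed_bin C r & plt r = t).
Proof.
move=> sC /andP[/hasP[c cC /hasP[w cw /eqP wt]] /(has_nthP ([::], [::]))[k]].
rewrite size_zip sC minnn nth_zip //= => kQ /hasP[r rk /eqP rt].
by split; [exists w => //; apply/flattenP; exists c | exists r => //; exists k].
Qed.

Lemma config_pop C j x rest : config C -> nth [::] C j = x :: rest ->
  config (set_nth [::] C j rest).
Proof.
case=> sC suf Cj; split.
  by rewrite size_set_nth -sC; apply/maxn_idPr; rewrite (nth_cons_lt_size Cj).
move=> k; rewrite nth_set_nth /=; case: eqP => [->|_]; last exact: suf.
by apply: suffix_trans (suf j); rewrite Cj suffix_cons.
Qed.

Lemma removed_bin_pop C j x rest r : config C -> nth [::] C j = x :: rest ->
  removed_bin (set_nth [::] C j rest) r -> removed_bin C r \/ r = x.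
Proof.
case=> _ suf Cj [k]; rewrite nth_set_nth /=.
case: eqVneq => [-> jQ|_ kQ] hr; last by left; exists k.
have /suffixP[R QjE] := suf j; rewrite Cj -cat1s catA in QjE.
move: hr; rewrite QjE removed_cat mem_cat mem_seq1 => /orP[hr|/eqP]; last by right.
by left; exists j; rewrite // Cj -cat1s QjE -catA removed_cat.
Qed.

Lemma front_arc C j x rest w : config C -> nth [::] C j = x :: rest ->
  w \in rest -> plt x != plt w -> sg_arc plt Q (plt x) (plt w).
Proof.
case=> sC suf Cj wr xw; rewrite /sg_arc xw.
have jQ : j < size Q by rewrite -sC (nth_cons_lt_size Cj).
have /suffixP[R QjE] := suf j; rewrite Cj -cat1s catA in QjE.
apply/hasP; exists (nth [::] Q j); first exact: mem_nth.
apply/hasP; exists (size (R ++ [:: x])).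
  by rewrite mem_iota QjE !size_cat; lia.
by rewrite QjE take_size_cat // drop_size_cat // !map_f // mem_cat mem_seq1 eqxx orbT.
Qed.

Section Decomposition.

Variable X : seq (seq nat).
Hypothesis X_dpd : dir_path_decomp (plts plt Q) (sg_arc plt Q) X.

Definition ordered_removal C := forall r w, removed_bin C r -> w \in flatten C ->
  first_bag X (plt r) <= last_bag X (plt w).

Lemma ordered_removal_Q : ordered_removal Q.
Proof. by move=> r w /removed_bin_Q. Qed.

Lemma open_pallets_sub_bag C : config C -> ordered_removal C ->
  flatten C != [::] ->
  exists2 i, i < size X & {subset open_pallets plt Q C <= nth [::] X i}.
Proof.
move=> cC oC /(exists_argmin_seq (fun b => last_bag X (plt b)))[w wC wmin].
have [_ covers _ interval] := X_dpd.
have [i0 i0X wi0] := covers _ (mem_plts (config_mem cC wC)).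
have [iX _] := last_bag_spec i0X wi0.
exists (last_bag X (plt w)) => // t; rewrite mem_filter => /andP[tC tQ].
have [[b bC bt] [r rC rt]] := open_palletP cC.1 tC.
have [k kX tk] := covers _ tQ; have [lX tl] := last_bag_spec kX tk.
apply: (interval t (first_bag X t) (last_bag X t)) => //.
- by rewrite -rt; apply: oC.
- by rewrite -bt; apply: wmin.
- exact: mem_first_bag tk.
Qed.

Lemma open_pallets_le p C : 0 < p -> dpd_width X = p.-1 ->
  config C -> ordered_removal C -> size (open_pallets plt Q C) <= p.
Proof.
move=> p_gt0 width cC oC; have [C0|] := eqVneq (flatten C) [::].
  case e: (open_pallets plt Q C) => [//|t s].
  have : t \in open_pallets plt Q C by rewrite e mem_head.
  by rewrite mem_filter => /andP[/(open_palletP cC.1)[[w]]]; rewrite C0.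
case/(open_pallets_sub_bag cC oC) => i iX sub.
have sub' : {subset open_pallets plt Q C <= undup (nth [::] X i)}.
  by move=> t /sub; rewrite mem_undup.
apply: leq_trans (uniq_leq_size (filter_uniq _ (undup_uniq _)) sub') _.
rewrite -(prednK p_gt0) -width /dpd_width.
apply: leq_trans (leqSpred _).
by apply: (leq_bigmax_seq (F := fun B : seq nat => size (undup B))); rewrite ?mem_nth.
Qed.

Lemma front_bag_le C j x rest w : config C -> nth [::] C j = x :: rest ->
  w \in x :: rest -> first_bag X (plt x) <= last_bag X (plt w).
Proof.
move=> cC Cj wC; have [_ covers arcs _] := X_dpd.
have xQ : x \in flatten Q.
  by apply: (config_mem cC); apply: (@mem_flatten_nth _ _ j); rewrite Cj mem_head.
have wQ : w \in flatten Q.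
  by apply: (config_mem cC); apply: (@mem_flatten_nth _ _ j); rewrite Cj.
have [xw|xw] := eqVneq (plt x) (plt w).
  have [i iX wi] := covers _ (mem_plts wQ).
  by apply: leq_trans (last_bag_ge iX wi); apply: first_bag_le; rewrite ?xw.
have wr : w \in rest by move: wC; rewrite inE => /predU1P[wx|//]; rewrite wx eqxx in xw.
have [i [k [ik kX xi wk]]] := arcs _ _ (mem_plts xQ) (mem_plts wQ) (front_arc cC Cj wr xw).
apply: leq_trans (first_bag_le xi) _.
exact: leq_trans ik (last_bag_ge kX wk).
Qed.

Lemma greedy_step C : config C -> ordered_removal C -> flatten C != [::] ->
  exists C', [/\ step C C', config C', ordered_removal C'
               & size (flatten C') < size (flatten C)].
Proof.
move=> cC oC /(exists_argmin_seq (fun b => last_bag X (plt b)))[w wC wmin].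
have /flattenP[c c_in wc] := wC.
have : nth [::] C (index c C) = c by rewrite nth_index.
move: (index c C) => j; case: c {c_in} wc => [//|x rest] wc Cj.
have xw := front_bag_le cC Cj wc.
have popC := perm_flatten_pop Cj.
exists (set_nth [::] C j rest); split.
- apply/hasP; exists j; last by rewrite Cj eqxx.
  by rewrite mem_iota (nth_cons_lt_size Cj).
- exact: config_pop Cj.
- move=> r w' /(removed_bin_pop cC Cj)[rC|->] w'C;
    have w'C0 : w' \in flatten C by rewrite (perm_mem popC) inE w'C orbT.
  + exact: oC.
  + exact: leq_trans xw (wmin _ w'C0).
- by rewrite (perm_size popC).
Qed.

Lemma greedy_processing n C : size (flatten C) <= n ->
  config C -> ordered_removal C ->
  exists cs, [/\ path (@step T) C cs, last C cs = nseq (size Q) [::]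
               & {in C :: cs, forall D, config D /\ ordered_removal D}].
Proof.
elim: n C => [|n IH] C sizeC cC oC; have [C0|nonempty] := eqVneq (flatten C) [::].
- by exists [::]; rewrite /= -cC.1 -flatten_nil_nseq //; split=> // D /predU1P[->|].
- by move: sizeC; rewrite leqn0 size_eq0 (negPf nonempty).
- by exists [::]; rewrite /= -cC.1 -flatten_nil_nseq //; split=> // D /predU1P[->|].
have [C' [stepC' cC' oC' sizeC']] := greedy_step cC oC nonempty.
have [|cs [path_cs last_cs inv_cs]] := IH C' _ cC' oC'; first exact: leq_trans sizeC' sizeC.
exists (C' :: cs); split; rewrite /= ?stepC' //.
by move=> D /predU1P[->|/inv_cs].
Qed.

End Decomposition.

End Processing.

Theorem theorem2 (T : eqType) (plt : T -> nat) (Q : seq (seq T)) (p : nat)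
  (X : seq (seq nat)) :
  instance plt Q -> 0 < p ->
  dir_path_decomp (plts plt Q) (sg_arc plt Q) X -> dpd_width X = p.-1 ->
  exists cs : seq (seq (seq T)),
    processing Q cs /\
    all (fun C => size (open_pallets plt Q C) <= p) (Q :: cs).
Proof.
move=> _ p_gt0 dpd width.
have [cs [path_cs last_cs inv_cs]] :=
  greedy_processing dpd (leqnn _) (config_Q Q) (ordered_removal_Q plt X).
exists cs; split; first by rewrite /processing path_cs last_cs eqxx.
by apply/allP => C /inv_cs[cC oC]; apply: (open_pallets_le dpd p_gt0 width cC oC).
Qed.
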